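(* Let $(W,g,V)\in BT_n$. Let $a=\dim(W\cap V^\perp)$, $b=\dim(V\cap W^\perp)$, and let $c$ be the rank of the pairing $\langle-,-\rangle$ restricted to $(W\cap\mathbb{F}_q^n)\times(V\cap\mathbb{F}_q^n)$. Then there is $x\in GL_n(\mathbb{F}_q)$ with $x\cdot(W,g,V)=(W',g',V')$ where, writing $E_1=\mathrm{span}\{e_1,\dots,e_a\}$, $E_2=\mathrm{span}\{e_{a+1},\dots,e_{n-b-c}\}$, $E_3=\mathrm{span}\{e_{n-b-c+1},\dots,e_{n-c}\}$, $E_4=\mathrm{span}\{e_{n-c+1},e_{n-c+2},\dots\}$, we have $V'=E_3\oplus E_4$, $W'=E_1\oplus E_4$, and $g'$, as an element of $GL_n(\mathbb{F}_q)$ written in blocks of sizes $a,\,n-a-b-c,\,b,\,c$, has the form \[ \begin{bmatrix}\mathrm{Id}&0&0&0\\ C&A&0&0\\ D&B&\mathrm{Id}&0\\ 0&0&0&\mathrm{Id}\end{bmatrix} \] for some matrices $A,B,C,D$.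
   Context: $\mathbb{F}_q^\infty$ has basis $e_1,e_2,\dots$; $\mathbb{F}_q^n=\mathrm{span}\{e_1,\dots,e_n\}$. $GL_\infty(\mathbb{F}_q)=\varinjlim GL_n(\mathbb{F}_q)$ under $g\mapsto\operatorname{diag}(g,\mathrm{Id})$, i.e. invertible $\mathbb{Z}_{>0}\times\mathbb{Z}_{>0}$ matrices differing from the identity in finitely many entries; $g^T$ is the transpose. A subspace is smooth if it contains $e_i$ for all sufficiently large $i$. A bounding triple is $(W,g,V)$ with $W,V$ smooth, $g\in GL_\infty(\mathbb{F}_q)$, $g$ acting as identity on $V$ and $g^T$ acting as identity on $W$. $BT_n$ is the set of bounding triples with $e_{n+1},e_{n+2},\dots\in V\cap W$. $GL_\infty(\mathbb{F}_q)$ acts by $x\cdot(W,g,V)=(x^{-T}W,xgx^{-1},xV)$, $x^{-T}=(x^{-1})^T$. $\langle-,-\rangle$ is the bilinear pairing with $\langle e_i,e_j\rangle=\delta_{ij}$; $W^\perp=\{v:\langle w,v\rangle=0\ \forall w\in W\}$ and $V^\perp=\{w:\langle w,v\rangle=0\ \forall v\in V\}$. *)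

From HB Require Import structures.
From mathcomp Require Import all_boot all_order all_algebra.
Set Implicit Arguments. Unset Strict Implicit. Unset Printing Implicit Defensive.
Import GRing.Theory.
Local Open Scope ring_scope.

(* A bounding triple (W,g,V) in BT_n is determined by its restriction to
   F_q^n = span{e_1..e_n}: W = W_n (+) span{e_i | i>n}, V = V_n (+) span{e_i | i>n},
   g = diag(g_n, Id).  We represent:
   - a subspace of F_q^n by a matrix 'M[F]_n whose ROW space is the subspace;
     a vector of F_q^n is a row vector 'rV[F]_n of coordinates in e_1..e_n
     (0-indexed: coordinate i : 'I_n is the coefficient of e_(i+1));
   - g_n by a matrix g : 'M[F]_n acting on column vectors (v |-> g v), i.e. on
     row vectors by v |-> v *m g^T;
   - the pairing <u,v> = sum_i u_i v_i, i.e. u *m v^T. *)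

Section Defs.
Variable F : fieldType.
Variable n : nat.

Definition is_BTn (W g V : 'M[F]_n) : Prop :=
  [/\ g \in unitmx,
      (forall v : 'rV[F]_n, (v <= V)%MS -> v *m g^T = v) &
      (forall w : 'rV[F]_n, (w <= W)%MS -> w *m g = w)].

(* V^perp = {w : <w,v> = 0 for all v in V}  (it lies in F_q^n since V contains
   e_i for all i > n). *)
Definition perp (V : 'M[F]_n) : 'M[F]_n := kermx V^T.

(* rank of the pairing <-,-> restricted to W x V: rank of the Gram matrix
   of spanning families of W and V. *)
Definition pairing_rank (W V : 'M[F]_n) : nat := \rank (W *m V^T).

(* the action x.(W,g,V) = (x^{-T} W, x g x^{-1}, x V), x in GL_n *)
Definition act_W (x W : 'M[F]_n) : 'M[F]_n := W *m invmx x.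
Definition act_g (x g : 'M[F]_n) : 'M[F]_n := x *m g *m invmx x.
Definition act_V (x V : 'M[F]_n) : 'M[F]_n := V *m x^T.

Definition coord_span (P : pred 'I_n) : 'M[F]_n :=
  \matrix_(i, j) ((P i && (i == j))%:R).

Definition V_normal (b c : nat) : 'M[F]_n :=
  coord_span (fun i : 'I_n => (n - b - c <= i)%N).
Definition W_normal (a c : nat) : 'M[F]_n :=
  coord_span (fun i : 'I_n => (i < a)%N || (n - c <= i)%N).

Definition block_form (a b c : nat) (M : 'M[F]_n) : Prop :=
  let blk1 := fun i : 'I_n => (i < a)%N in
  let blk2 := fun i : 'I_n => (a <= i < n - b - c)%N in
  let blk3 := fun i : 'I_n => (n - b - c <= i < n - c)%N in
  let blk4 := fun i : 'I_n => (n - c <= i)%N in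
  [/\ forall i j, blk1 i -> M i j = (i == j)%:R,
      forall i j, blk2 i -> blk3 j || blk4 j -> M i j = 0,
      forall i j, blk3 i -> blk3 j -> M i j = (i == j)%:R,
      forall i j, blk3 i -> blk4 j -> M i j = 0 &
      forall i j, blk4 i -> M i j = (i == j)%:R].

End Defs.

From Pilot Require Import Defs.
From HB Require Import structures.
From mathcomp Require Import all_boot all_order all_algebra.
From mathcomp Require Import zify.
Set Implicit Arguments. Unset Strict Implicit. Unset Printing Implicit Defensive.
Import GRing.Theory.
Local Open Scope ring_scope.

(* Let P = V^perp.  Take for x the matrix whose rows are, in order, a basis of
   W :&: P (a vectors), of a complement of it in P, of a complement of P + W
   (b vectors) and of a complement of W :&: P in W (c vectors).  The first
   n - b - c rows pair to zero with V, so x V lies in E_3 (+) E_4; W is spanned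
   by the first and last blocks, so x^-T W lies in E_1 (+) E_4; since
   dim V = b + c and dim W = a + c these inclusions are equalities.  Then g'
   fixes V' and g'^T fixes W', which pins down rows 1, 4 and columns 3, 4 of g'. *)

Lemma card_ord_geq n k : #|[pred i : 'I_n | k <= i]%N| = (n - k)%N.
Proof.
rewrite -sum1_card big_mkcond /=; under eq_bigr do rewrite inE.
elim: n => [|n IHn]; first by rewrite big_ord0.
by rewrite big_ord_recr /= IHn; case: leqP => /= ?; lia.
Qed.

Lemma card_ord_ltn n k : #|[pred i : 'I_n | i < k]%N| = minn k n.
Proof.
rewrite -sum1_card big_mkcond /=; under eq_bigr do rewrite inE.
elim: n => [|n IHn]; first by rewrite big_ord0 minn0.
by rewrite big_ord_recr /= IHn; case: leqP => /= ?; lia.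
Qed.

(* The qualified name [Defs.coord_span] avoids [vector]'s unrelated [coord_span]. *)
Section CoordSpan.
Variables (F : fieldType) (n : nat).
Implicit Types (S T : pred 'I_n) (M : 'M[F]_n).

Lemma row_coord_span_mul S M i :
  row i (Defs.coord_span F S *m M) = if S i then row i M else 0.
Proof.
apply/rowP => j; rewrite !mxE (bigD1 i) //= big1 => [|k /negbTE kNi].
  by rewrite !mxE eqxx andbT addr0; case: (S i); rewrite ?mul1r ?mul0r ?mxE.
by rewrite !mxE eq_sym kNi andbF mul0r.
Qed.

Lemma sub_coord_span S m (A : 'M[F]_(m, n)) :
  (forall k j, ~~ S j -> A k j = 0) -> (A <= Defs.coord_span F S)%MS.
Proof.
move=> A0; suff <- : A *m Defs.coord_span F S = A by apply: submxMl.
apply/matrixP => k j; rewrite !mxE (bigD1 j) //= big1 => [|l /negbTE lNj].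
  rewrite !mxE eqxx andbT addr0; case Sj: (S j); first by rewrite mulr1.
  by rewrite A0 ?Sj ?mulr0.
by rewrite !mxE lNj andbF mulr0.
Qed.

Lemma coord_span_mulS S T M :
  {subset S <= T} -> (Defs.coord_span F S *m M <= Defs.coord_span F T *m M)%MS.
Proof.
move=> sST; apply/row_subP => i; rewrite row_coord_span_mul.
case: ifP => [Si | _]; last exact: sub0mx.
have -> : row i M = row i (Defs.coord_span F T *m M).
  by rewrite row_coord_span_mul [T i]sST.
exact: row_sub.
Qed.

Lemma mxrank_coord_span S : (\rank (Defs.coord_span F S) <= #|S|)%N.
Proof.
have sub_deltas : (Defs.coord_span F S <= \sum_(i | S i) delta_mx i i)%MS.
  apply/row_subP => i; case Si: (S i); last first.
    by rewrite (_ : row i _ = 0) ?sub0mx //; apply/rowP => j; rewrite !mxE Si.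
  apply: (sumsmx_sup i) => //.
  have -> : row i (Defs.coord_span F S) = row i (delta_mx i i).
    by apply/rowP => j; rewrite !mxE Si eqxx eq_sym.
  exact: row_sub.
apply: leq_trans (mxrankS sub_deltas) _.
apply: leq_trans (mxrank_sum_leqif _).1 _ => /=.
by rewrite (eq_bigr (fun _ => 1%N)) ?sum1_card // => i _; rewrite mxrank_delta.
Qed.

Lemma fix_coord_span_row (U : 'M[F]_n) S M :
  (forall u : 'rV[F]_n, (u <= U)%MS -> u *m M = u) -> (Defs.coord_span F S <= U)%MS ->
  forall i j, S i -> M i j = (i == j)%:R.
Proof.
move=> fixU sSU i j Si.
have row_S : row i (Defs.coord_span F S) = row i (1%:M : 'M[F]_n).
  by rewrite -[Defs.coord_span F S]mulmx1 row_coord_span_mul Si.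
have : row i M = row i (1%:M : 'M[F]_n).
  rewrite -row_S -[RHS]fixU; last exact: submx_trans (row_sub _ _) sSU.
  by rewrite -row_mul row_coord_span_mul Si.
by move/(congr1 (fun r : 'rV[F]_n => r 0 j)); rewrite !mxE.
Qed.

End CoordSpan.

Section StackedBases.
Variables (F : fieldType) (n : nat).
Local Open Scope nat_scope.
Implicit Types (A : 'M[F]_n) (As Bs : seq 'M[F]_n).

Definition base_row A (k : nat) : 'rV[F]_n :=
  if insub k : option 'I_(\rank A) is Some i then row i (row_base A) else 0.

Lemma base_row_ord A (k : 'I_(\rank A)) : base_row A k = row k (row_base A).
Proof. by rewrite /base_row valK. Qed.

Lemma base_row_sub A k : (base_row A k <= A)%MS.
Proof.
rewrite /base_row; case: insubP => [i _ _ | _]; last exact: sub0mx.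
by rewrite -(eq_row_base A) row_sub.
Qed.

Fixpoint stack_row As (i : nat) : 'rV[F]_n :=
  if As is A :: As' then
    if i < \rank A then base_row A i else stack_row As' (i - \rank A)
  else 0.

Definition stack_mx As : 'M[F]_n := \matrix_(i < n) stack_row As i.

Definition rank_offset As : nat := sumn [seq \rank A | A <- As].

Lemma stack_row_cat As A Bs k :
  k < \rank A -> stack_row (As ++ A :: Bs) (rank_offset As + k) = base_row A k.
Proof.
move=> ltkA; elim: As => [|B As IHAs] /=; first by rewrite add0n ltkA.
by rewrite /rank_offset /= -addnA ltnNge leq_addr /= addKn IHAs.
Qed.

Lemma row_stack_mx_sub As A Bs (i : 'I_n) :
  rank_offset As <= i < rank_offset As + \rank A ->
  (row i (stack_mx (As ++ A :: Bs)) <= A)%MS.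
Proof.
case/andP=> le_off lt_i; rewrite rowK -(subnKC le_off) stack_row_cat.
  exact: base_row_sub.
by rewrite ltn_subLR.
Qed.

Lemma sub_stack_mx As A Bs :
  rank_offset As + \rank A <= n ->
  (A <= Defs.coord_span F
          [pred i : 'I_n | (rank_offset As <= i < rank_offset As + \rank A)%N]
        *m stack_mx (As ++ A :: Bs))%MS.
Proof.
move=> le_n; rewrite -(eq_row_base A); apply/row_subP => k.
have lt_n : rank_offset As + k < n by apply: leq_trans le_n; rewrite ltn_add2l.
apply: (eq_row_sub (Ordinal lt_n)).
by rewrite row_coord_span_mul inE /= leq_addr ltn_add2l ltn_ord rowK stack_row_cat
  ?base_row_ord.
Qed.

End StackedBases.

Section AdaptedBasis.
Variables (F : fieldType) (n : nat).

Lemma adapted_basis (P W : 'M[F]_n) :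
  let a := \rank (W :&: P)%MS in
  let c := (\rank W - a)%N in
  exists2 x : 'M[F]_n, x \in unitmx &
    (forall i : 'I_n, (i < \rank P)%N -> (row i x <= P)%MS) /\
    (W <= W_normal F n a c *m x)%MS.
Proof.
move=> a c.
set A1 := (W :&: P)%MS; set A2 := (P :\: W)%MS.
set A3 := ((P + W)^C)%MS; set A4 := (W :\: P)%MS.
have rank1 : \rank A1 = a by [].
have rank12 : (\rank A1 + \rank A2 = \rank P)%N.
  by rewrite /A1 capmxC mxrank_cap_compl.
have rank14 : (a + \rank A4 = \rank W)%N := mxrank_cap_compl W P.
have rank_sum : (\rank (P + W) + a = \rank P + \rank W)%N.
  by rewrite /a capmxC mxrank_sum_cap.
have rank3 : \rank A3 = (n - \rank (P + W))%N := mxrank_compl _.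
have le_sum_n := rank_leq_col (P + W)%MS.
have sA1 := sub_stack_mx (As := [::]) (A := A1) [:: A2; A3; A4].
have sA2 := sub_stack_mx (As := [:: A1]) (A := A2) [:: A3; A4].
have sA3 := sub_stack_mx (As := [:: A1; A2]) (A := A3) [:: A4].
have sA4 := sub_stack_mx (As := [:: A1; A2; A3]) (A := A4) [::].
rewrite /rank_offset /= in sA1 sA2 sA3 sA4.
have {}sA1 := sA1 ltac:(lia); have {}sA2 := sA2 ltac:(lia).
have {}sA3 := sA3 ltac:(lia); have {}sA4 := sA4 ltac:(lia).
set x := stack_mx _ in sA1 sA2 sA3 sA4.
have [sA1x sA2x sA3x sA4x] : [/\ A1 <= x, A2 <= x, A3 <= x & A4 <= x]%MS.
  by split; apply/(submx_trans _ (submxMl _ _)); eassumption.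
have sPx : (P <= x)%MS by rewrite -(addsmx_diff_cap_eq P W) capmxC addsmx_sub sA2x.
have sWx : (W <= x)%MS by rewrite -(addsmx_diff_cap_eq W P) addsmx_sub sA4x.
exists x.
  rewrite -row_full_unit -sub1mx.
  apply: submx_trans (submx_full _ (addsmx_compl_full (P + W)%MS)) _.
  by rewrite !addsmx_sub sPx sWx.
split=> [i lt_iP | ].
  case: (ltnP i a) => [lt_ia | le_ai].
    apply: submx_trans (capmxSr W P).
    apply: (row_stack_mx_sub (As := [::]) (A := A1)).
    by rewrite /rank_offset /=; lia.
  apply: submx_trans (diffmxSl P W).
  apply: (row_stack_mx_sub (As := [:: A1]) (A := A2)).
  by rewrite /rank_offset /=; lia.
rewrite -(addsmx_diff_cap_eq W P) addsmx_sub.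
by rewrite (submx_trans sA4) ?(submx_trans sA1) // coord_span_mulS // => i;
  rewrite !inE /=; lia.
Qed.

End AdaptedBasis.

Section BoundingTriples.
Variables (F : fieldType) (n : nat).
Implicit Types (x W g V : 'M[F]_n).

Lemma mxrank_cap_perp W V : (\rank (W :&: perp V) + pairing_rank W V)%N = \rank W.
Proof. by rewrite addnC mxrank_mul_ker. Qed.

Lemma pairing_rankC W V : pairing_rank W V = pairing_rank V W.
Proof. by rewrite /pairing_rank -mxrank_tr trmx_mul trmxK. Qed.

Lemma mxrank_perp V : \rank (perp V) = (n - \rank V)%N.
Proof. by rewrite mxrank_ker mxrank_tr. Qed.

Lemma mxrank_V_normal b c : (\rank (V_normal F n b c) <= b + c)%N.
Proof. by apply: leq_trans (mxrank_coord_span _ _) _; rewrite card_ord_geq; lia. Qed.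

Lemma mxrank_W_normal a c : (\rank (W_normal F n a c) <= a + c)%N.
Proof.
apply: leq_trans (mxrank_coord_span _ _) _.
set A := [pred i : 'I_n | i < a]%N; set B := [pred i : 'I_n | n - c <= i]%N.
rewrite (eq_card (B := [predU A & B])) => [|i]; last by rewrite !inE.
apply: leq_trans (leq_addr #|[predI A & B]| _) _.
by rewrite cardUI card_ord_ltn card_ord_geq; lia.
Qed.

Lemma act_V_sub_coord_span x V (S : pred 'I_n) :
  (forall i, ~~ S i -> (row i x <= perp V)%MS) ->
  (act_V x V <= Defs.coord_span F S)%MS.
Proof.
move=> perp_rows; apply: sub_coord_span => k j /perp_rows /sub_kermxP xV0.
transitivity ((row j x *m V^T) 0 k); last by rewrite xV0 mxE.
by rewrite !mxE; apply: eq_bigr => l _; rewrite !mxE mulrC.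
Qed.

Lemma act_BTn x W g V : x \in unitmx ->
  is_BTn W g V -> is_BTn (act_W x W) (act_g x g) (act_V x V).
Proof.
move=> x_unit [g_unit fixV fixW]; split.
- by rewrite /act_g !unitmx_mul g_unit unitmx_inv x_unit.
- move=> _ /submxP[w ->]; rewrite /act_V /act_g !trmx_mul -!mulmxA.
  rewrite [x^T *m _]mulmxA -[x^T *m _]trmx_mul mulVmx // trmx1 mul1mx.
  by rewrite !mulmxA fixV ?submxMl.
- move=> _ /submxP[w ->]; rewrite /act_W /act_g -!mulmxA.
  rewrite [invmx x *m _]mulmxA mulVmx // mul1mx.
  by rewrite !mulmxA fixW ?submxMl.
Qed.

Lemma BTn_block_form W g V a b c : is_BTn W g V ->
  (V_normal F n b c <= V)%MS -> (W_normal F n a c <= W)%MS -> block_form a b c g.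
Proof.
move=> [_ fixV fixW] sVV sWW.
have rows := fix_coord_span_row fixW sWW.
have cols (i j : 'I_n) : (n - b - c <= j)%N -> g i j = (i == j)%:R.
  by move=> /(fix_coord_span_row fixV sVV i); rewrite mxE eq_sym.
have le_bc : (n - b - c <= n - c)%N by lia.
split=> i j /=.
- by move=> lt_ia; rewrite rows //= lt_ia.
- move=> /andP[_ lt_i] blk_j.
  have le_j : (n - b - c <= j)%N by case/orP: blk_j => [/andP[] | ]; lia.
  by rewrite cols // -val_eqE ltn_eqF //; apply: leq_trans lt_i le_j.
- by move=> _ /andP[le_j _]; rewrite cols.
- move=> /andP[_ lt_i] le_j; have le_bcj := leq_trans le_bc le_j.
  by rewrite cols // -val_eqE ltn_eqF //; apply: leq_trans lt_i le_j.
- by move=> le_i; rewrite rows //= le_i orbT.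
Qed.

End BoundingTriples.

Theorem proposition4p9 (F : finFieldType) (n : nat) (W g V : 'M[F]_n) :
  is_BTn W g V ->
  let a : nat := \rank (W :&: perp V)%MS in
  let b : nat := \rank (V :&: perp W)%MS in
  let c : nat := pairing_rank W V in
  exists2 x : 'M[F]_n, x \in unitmx &
    [/\ (act_V x V == @V_normal F n b c)%MS,
        (act_W x W == @W_normal F n a c)%MS &
        block_form a b c (act_g x g)].
Proof.
move=> BT a b c.
have rankW : \rank W = (a + c)%N := esym (mxrank_cap_perp W V).
have rankV : \rank V = (b + c)%N by rewrite -(mxrank_cap_perp V W) pairing_rankC.
have [x x_unit [perp_rows sWx]] := adapted_basis (perp V) W.
rewrite -/a rankW addKn in sWx.
have sV : (act_V x V <= V_normal F n b c)%MS.
  apply: act_V_sub_coord_span => i; rewrite -ltnNge => lt_i.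
  by apply: perp_rows; rewrite mxrank_perp rankV subnDA.
have sW : (act_W x W <= W_normal F n a c)%MS.
  by rewrite /act_W -(mulmxK x_unit (W_normal F n a c)) submxMr.
have eqV : (act_V x V == V_normal F n b c)%MS.
  rewrite -(mxrank_leqif_eq sV).2 eqn_leq mxrankS //=.
  by rewrite /act_V mxrankMfree ?row_free_unit ?unitmx_tr // rankV mxrank_V_normal.
have eqW : (act_W x W == W_normal F n a c)%MS.
  rewrite -(mxrank_leqif_eq sW).2 eqn_leq mxrankS //=.
  by rewrite /act_W mxrankMfree ?row_free_unit ?unitmx_inv // rankW mxrank_W_normal.
exists x => //; split=> //.
apply: BTn_block_form (act_BTn x_unit BT) _ _.
  by case/andP: eqV.
by case/andP: eqW.
Qed.
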